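(* Every irreducible SDAN contains only one atom.
   Context: Fix a finite nonempty set $A$ of agents; each $a\in A$ has a nonempty set $Q_a$ of internal states, $Q_A=\prod_{a\in A}Q_a$. A transformer is a left-total relation on $Q_A$; for $S\subseteq A$ an $S$-transformer is one with $(q,q')\in\tau\Rightarrow q_a=q'_a$ for all $a\notin S$. An atom is $n=(P_n,R_n,\delta_n)$: $P_n\subseteq A$ nonempty (parties), $R_n$ finite nonempty (outcomes), $\delta_n$ assigns to each $r\in R_n$ a $P_n$-transformer $\langle n,r\rangle$. A negotiation is $\mathcal N=(N,n_0,n_f,\mathcal X)$ with $N$ a finite set of atoms, $n_0,n_f\in N$ (possibly equal), $T(N)=\{(n,a,r): n\in N,a\in P_n,r\in R_n\}$, $\mathcal X:T(N)\to 2^N$, such that every agent is a party of $n_0$ and of $n_f$, and $\mathcal X(n,a,r)=\emptyset$ iff $n=n_f$. Its graph has vertices $N$ and edges $(n,n')$ whenever $n'\in\mathcal X(n,a,r)$ for some $(n,a,r)$; $\mathcal N$ is acyclic if the graph has no cycle. A marking is $x:A\to 2^N$; initial $x_0(a)=\{n_0\}$, final $x_f(a)=\emptyset$. $x$ enables $n$ if $n\in x(a)$ for all $a\in P_n$; then for $r\in R_n$ the step $(n,r)$ leads to $x'$ with $x'(a)=\mathcal X(n,a,r)$ for $a\in P_n$, $x'(a)=x(a)$ otherwise. A large step is a finite occurrence sequence from $x_0$ to $x_f$. $\mathcal N$ is sound if every atom is enabled at some reachable marking and every occurrence sequence from $x_0$ is a large step or can be extended to one. An agent $a$ is deterministic if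 for each $(n,a,r)\in T(N)$ with $n\ne n_f$, $\mathcal X(n,a,r)$ is a singleton; $\mathcal N$ is deterministic if all agents are deterministic. An SDAN is a sound, deterministic, acyclic negotiation. Merge rule. Guard: some atom $n$ has distinct outcomes $r_1,r_2$ with $\mathcal X(n,a,r_1)=\mathcal X(n,a,r_2)$ for all $a\in P_n$. Action: replace $r_1,r_2$ in $R_n$ by a fresh outcome $r_f$ with $\mathcal X(n,a,r_f)=\mathcal X(n,a,r_1)$ for $a\in P_n$ and $\langle n,r_f\rangle=\langle n,r_1\rangle\cup\langle n,r_2\rangle$. $(n,r)$ unconditionally enables $n'$ if $P_n\supseteq P_{n'}$ and $\mathcal X(n,a,r)=\{n'\}$ for all $a\in P_{n'}$. d-shortcut rule. Guard: atoms $n\neq n'$ and $r\in R_n$ such that $(n,r)$ unconditionally enables $n'$; $n'$ has at most one outcome; and if $n'\in\mathcal X(\tilde n,\tilde a,\tilde r)$ for at least one $(\tilde n,\tilde a,\tilde r)\in T(N)$ with $\tilde n\neq n$, then $\{n'\}=\mathcal X(\tilde n,\tilde a,\tilde r)$ for some $(\tilde n,\tilde a,\tilde r)\in T(N)$ with $\tilde n\ne n$. Action: (1) replace $R_n$ by $(R_n\setminus\{r\})\cup\{r'_f:r'\in R_{n'}\}$ with fresh names; (2) for $a\in P_{n'}$ set $\mathcal X(n,a,r'_f)=\mathcal X(n',a,r')$, for $a\in P_n\setminus P_{n'}$ set $\mathcal X(n,a,r'_f)=\mathcal X(n,a,r)$; (3) $\langle n,r'_f\rangle=\langle n,r\rangle\langle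 n',r'\rangle$ (relational composition); (4) if afterwards $n'\notin\mathcal X(\tilde n,\tilde a,\tilde r)$ for all $(\tilde n,\tilde a,\tilde r)\in T(N)$, remove $n'$. An SDAN is irreducible if neither the merge rule nor the d-shortcut rule can be applied to it. *)

From mathcomp Require Import all_boot.
Set Implicit Arguments. Unset Strict Implicit. Unset Printing Implicit Defensive.

(* Negotiations over a finite agent type [A], a finite type [Nt] whose
   elements are exactly the atoms of the negotiation, and a finite universe
   [Out] of outcome names (each atom n has its own finite set [R n] of
   outcomes, a nonempty subset of [Out]).  [Qa a] is the (nonempty) type of
   internal states of agent [a]; global states are [Q Qa]. *)

Definition Q (A : finType) (Qa : A -> Type) := forall a : A, Qa a.

Definition left_total (X : Type) (tr : X -> X -> Prop) :=
  forall q, exists q', tr q q'.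

Definition S_transformer (A : finType) (Qa : A -> Type) (S : {set A})
    (tr : Q Qa -> Q Qa -> Prop) :=
  left_total tr /\ forall q q', tr q q' -> forall a, a \notin S -> q a = q' a.

Record negotiation (A Nt Out : finType) (Qa : A -> Type) := Negotiation {
  P : Nt -> {set A};
  R : Nt -> {set Out};
  delta : Nt -> Out -> Q Qa -> Q Qa -> Prop;
  X : Nt -> A -> Out -> {set Nt};
  n0 : Nt;
  nf : Nt;
  agents_nonempty : 0 < #|A|;
  states_nonempty : forall a, inhabited (Qa a);
  P_nonempty : forall n, P n != set0;
  R_nonempty : forall n, R n != set0;
  delta_ok : forall n r, r \in R n -> S_transformer (P n) (delta n r);
  P_n0 : forall a, a \in P n0;
  P_nf : forall a, a \in P nf;
  X_empty : forall n a r, a \in P n -> r \in R n -> (X n a r == set0) = (n == nf)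
}.

Section Negotiations.
Variables (A Nt Out : finType) (Qa : A -> Type) (N : @negotiation A Nt Out Qa).

Definition inT (n : Nt) (a : A) (r : Out) := (a \in P N n) && (r \in R N n).

Definition gedge : rel Nt :=
  fun n n' => [exists a, exists r, inT n a r && (n' \in X N n a r)].

Definition acyclic := forall n n', gedge n n' -> ~~ connect gedge n' n.

Definition marking := {ffun A -> {set Nt}}.
Definition x0 : marking := [ffun _ => [set n0 N]].
Definition xf : marking := [ffun _ => set0].

Definition enabled (x : marking) (n : Nt) := forall a, a \in P N n -> n \in x a.

Definition fire (x : marking) (n : Nt) (r : Out) : marking :=
  [ffun a => if a \in P N n then X N n a r else x a].

Fixpoint occurs (x : marking) (s : seq (Nt * Out)) (y : marking) : Prop :=
  match s with
  | [::] => y = x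
  | (n, r) :: s' => [/\ enabled x n, r \in R N n & occurs (fire x n r) s' y]
  end.

Definition large_step (s : seq (Nt * Out)) := occurs x0 s xf.

Definition sound :=
  (forall n, exists s x, occurs x0 s x /\ enabled x n) /\
  (forall s x, occurs x0 s x -> large_step s \/ exists s', large_step (s ++ s')).

Definition deterministic :=
  forall n a r, inT n a r -> n != nf N -> #|X N n a r| = 1.

Definition SDAN := [/\ sound, deterministic & acyclic].

Definition merge_applicable :=
  exists n r1 r2, [/\ r1 \in R N n, r2 \in R N n, r1 != r2 &
    forall a, a \in P N n -> X N n a r1 = X N n a r2].

Definition uncond_enables (n : Nt) (r : Out) (n' : Nt) :=
  P N n' \subset P N n /\ forall a, a \in P N n' -> X N n a r = [set n'].

Definition dshortcut_applicable :=
  exists n n' r, [/\ n != n', r \in R N n, uncond_enables n r n',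
    #|R N n'| <= 1 &
    (exists nt a_t rt, [/\ inT nt a_t rt, nt != n & n' \in X N nt a_t rt]) ->
    (exists nt a_t rt, [/\ inT nt a_t rt, nt != n & X N nt a_t rt = [set n']])].

Definition irreducible := ~ merge_applicable /\ ~ dshortcut_applicable.

End Negotiations.

From mathcomp Require Import all_boot.
From Stdlib Require Import Classical Wf_nat.
Set Implicit Arguments. Unset Strict Implicit. Unset Printing Implicit Defensive.

(* If the initial and final atoms coincide, firing n0 ends every run, so
   soundness leaves no room for another atom.  Otherwise we show that an
   irreducible SDAN has no atom with two outcomes, after which the first atom
   fired after n0 is a d-shortcut target.  For the absence of branching, take
   a branching atom n after which no atom branches, and a reachable marking
   at which n is the only enabled atom.  Every atom fired in one completion
   after an outcome r of n is fired in every completion after every outcome: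
   otherwise the earliest such atom g receives all its tokens from (n, r), and
   (n, r) would unconditionally enable g.  Applied to the successors t1, t2 of
   n reached by two outcomes r1, r2 of a party, this gives paths t1 ->* t2 and
   t2 ->* t1, so t1 = t2 by acyclicity and r1, r2 can be merged. *)

Lemma ex_minimizer (T : Type) (Pr : T -> Prop) (f : T -> nat) :
  (exists x, Pr x) -> exists x, Pr x /\ forall y, Pr y -> f x <= f y.
Proof.
case=> x; elim/(well_founded_ind (well_founded_ltof _ f)): x => x IH Px.
case: (classic (exists y, Pr y /\ f y < f x)) => [[y [Py /ltP lt_yx]]|no_lt].
  exact: IH lt_yx Py.
exists x; split=> // y Py; rewrite leqNgt; apply/negP => lt_yx.
by apply: no_lt; exists y.
Qed.

Section Negotiation.
Variables (A Nt Out : finType) (Qa : A -> Type) (N : @negotiation A Nt Out Qa).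
Implicit Types (x y z w : marking A Nt) (s : seq (Nt * Out)).

Notation E := (gedge N).
Notation xF := (xf A Nt).

Lemma exists_party n : exists a, a \in P N n.
Proof. by case/set0Pn: (P_nonempty N n) => a Ha; exists a. Qed.

Lemma exists_outcome n : exists r, r \in R N n.
Proof. by case/set0Pn: (R_nonempty N n) => r Hr; exists r. Qed.

Lemma gedgeP n a r n' : a \in P N n -> r \in R N n -> n' \in X N n a r -> E n n'.
Proof.
by move=> Ha Hr Hn'; apply/existsP; exists a; apply/existsP; exists r; rewrite /inT Ha Hr.
Qed.

Lemma occurs_cat x s1 s2 w :
  occurs N x (s1 ++ s2) w <-> exists y, occurs N x s1 y /\ occurs N y s2 w.
Proof.
elim: s1 x => [|[n r] s IH] x /=.
  by split=> [Hs|[y [-> Hs]]]; first exists x.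
split=> [[Hn Hr /IH [y [Hs1 Hs2]]]|[y [[Hn Hr Hs1] Hs2]]]; first by exists y.
by split=> //; apply/IH; exists y.
Qed.

Lemma occurs_rcons x s n r y :
  occurs N x s y -> enabled N y n -> r \in R N n ->
  occurs N x (rcons s (n, r)) (fire N y n r).
Proof. by move=> Hs Hn Hr; rewrite -cats1; apply/occurs_cat; exists y. Qed.

Lemma occurs_functional x s y y' : occurs N x s y -> occurs N x s y' -> y = y'.
Proof.
elim: s x => [|[n r] s IH] x /=; first by move=> -> ->.
by case=> _ _ Hy [_ _ Hy']; apply: IH Hy Hy'.
Qed.

Lemma mem_map_fst s n r : (n, r) \in s -> n \in map fst s.
Proof. by move=> Hin; apply/mapP; exists (n, r). Qed.

Lemma occurs_split x s w n r : occurs N x s w -> (n, r) \in s ->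
  exists s1 s2 y, [/\ s = s1 ++ (n, r) :: s2, occurs N x s1 y, enabled N y n,
     r \in R N n & occurs N (fire N y n r) s2 w].
Proof.
elim: s x => [|[n' r'] s IH] x //= [Hn' Hr' Hs].
rewrite inE => /orP [/eqP [-> ->]|Hin]; first by exists [::], s, x.
have [s1 [s2 [y [-> Hs1 Hn Hr Hs2]]]] := IH _ Hs Hin.
by exists ((n', r') :: s1), s2, y.
Qed.

Lemma occurs_fired_connect x s w a n r :
  occurs N x s w -> (n, r) \in s -> a \in P N n ->
  exists2 m, m \in x a & connect E m n.
Proof.
elim: s x => [|[n' r'] s IH] x //= [Hn' Hr' Hs].
rewrite inE => /orP [/eqP [-> _] Ha|Hin Ha]; first by exists n'; [apply: Hn'|].
have [m] := IH _ Hs Hin Ha; rewrite /fire ffunE; case: ifP => Ha' Hm Hmn.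
  by exists n'; [apply: Hn'|apply: connect_trans Hmn; apply/connect1/(gedgeP Ha' Hr' Hm)].
by exists m.
Qed.

Lemma occurs_token_source x s y a m : occurs N x s y -> m \in y a ->
  m \in x a \/ exists n r, [/\ (n, r) \in s, a \in P N n, r \in R N n &
                             m \in X N n a r].
Proof.
elim: s x => [|[n r] s IH] x /=; first by move=> -> ->; left.
case=> Hn Hr Hs Hm; case: (IH _ Hs Hm) => [|[n' [r' [Hin Ha Hr' Hm']]]].
  rewrite /fire ffunE; case: ifP => Ha Hm'; last by left.
  by right; exists n, r; rewrite inE eqxx.
by right; exists n', r'; rewrite inE Hin orbT.
Qed.

Lemma occurs_from_final_dead s y n : occurs N xF s y -> ~ enabled N y n.
Proof.
case: s => [|[n' r] s] /= => [->|[Hn' _ _]].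
  by have [a Ha] := exists_party n; move/(_ a Ha); rewrite ffunE inE.
by have [a Ha] := exists_party n'; move: (Hn' a Ha); rewrite ffunE inE.
Qed.

Section Deterministic.
Hypothesis det : deterministic N.

Definition one_token x := forall a, #|x a| <= 1.

Lemma card_X_le1 n a r : a \in P N n -> r \in R N n -> #|X N n a r| <= 1.
Proof.
move=> Ha Hr; case: (eqVneq n (nf N)) => [En|Hn]; last by rewrite det // /inT Ha Hr.
by move: (X_empty Ha Hr); rewrite En eqxx => /eqP ->; rewrite cards0.
Qed.

Lemma card_le1_set1 (T : finType) (S : {set T}) m : #|S| <= 1 -> m \in S -> S = [set m].
Proof.
move=> HS Hm; apply/setP => m'; rewrite in_set1.
by apply/idP/eqP => [Hm'|->] //; apply: (card_le1_eqP HS).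
Qed.

Lemma X_set1 n a r m : a \in P N n -> r \in R N n -> m \in X N n a r ->
  X N n a r = [set m].
Proof. by move=> Ha Hr; apply/card_le1_set1/card_X_le1. Qed.

Lemma one_token_x0 : one_token (x0 N).
Proof. by move=> a; rewrite ffunE cards1. Qed.

Lemma one_token_fire x n r : one_token x -> r \in R N n -> one_token (fire N x n r).
Proof. by move=> Hx Hr a; rewrite ffunE; case: ifP => // Ha; apply: card_X_le1. Qed.

Lemma one_token_occurs x s y : one_token x -> occurs N x s y -> one_token y.
Proof.
elim: s x => [|[n r] s IH] x Hx /=; first by move=> ->.
by case=> _ Hr; apply/IH/one_token_fire.
Qed.

Lemma one_token_reachable s y : occurs N (x0 N) s y -> one_token y.
Proof. exact: one_token_occurs one_token_x0. Qed.

Lemma one_token_eq x a m m' : one_token x -> m \in x a -> m' \in x a -> m = m'.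
Proof. by move=> Hx Hm Hm'; apply: (card_le1_eqP (Hx a)). Qed.

Lemma token_consumed x s a m : one_token x -> occurs N x s xF -> m \in x a ->
  exists r, (m, r) \in s /\ a \in P N m.
Proof.
elim: s x => [|[n r] s IH] x Hx /=; first by move=> <-; rewrite ffunE inE.
case=> Hn Hr Hs Hm; case Ha: (a \in P N n).
  by rewrite (one_token_eq Hx Hm (Hn a Ha)); exists r; rewrite inE eqxx.
have Hm' : m \in fire N x n r a by rewrite ffunE Ha.
have [r' [Hin Ha']] := IH _ (one_token_fire Hx Hr) Hs Hm'.
by exists r'; rewrite inE Hin orbT.
Qed.

End Deterministic.

Section Acyclic.
Hypothesis acyc : acyclic N.

Lemma connect_antisym m m' : connect E m m' -> connect E m' m -> m = m'.
Proof.
case/connectP => [[|u p] /= Hp ->] //; case/andP: Hp => Hmu Hp Hback.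
have Hu : connect E u (last u p) by apply/connectP; exists p.
by have := acyc Hmu; rewrite (connect_trans Hu Hback).
Qed.

Lemma edge_neq m m' : E m m' -> m != m'.
Proof. by move=> Hmm'; apply/eqP => Em; move: (acyc Hmm'); rewrite Em connect0. Qed.

Definition height m := #|[set m' | connect E m m']|.

Lemma height_connect m m' : connect E m m' -> height m' <= height m.
Proof.
move=> Hmm'; apply/subset_leq_card/subsetP => u; rewrite !inE.
exact: connect_trans.
Qed.

Lemma height_edge m m' : E m m' -> height m' < height m.
Proof.
move=> Hmm'; apply/proper_card/properP; split.
  by apply/subsetP => u; rewrite !inE; apply/connect_trans/connect1.
by exists m; rewrite !inE ?connect0 // acyc.
Qed.

(* Firing lowers the largest height held by each party of the fired atom. *)
Definition potential x := \sum_(a : A) \max_(m in x a) height m.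

Lemma potential_fire x n r :
  enabled N x n -> r \in R N n -> potential (fire N x n r) < potential x.
Proof.
move=> Hn Hr; have [a0 Ha0] := exists_party n.
have Hlt a : a \in P N n -> \max_(m in X N n a r) height m < \max_(m in x a) height m.
  move=> Ha; apply: (@leq_trans (height n)); last exact: bigmax_sup (Hn a Ha) _.
  have Hpos : 0 < height n by apply/card_gt0P; exists n; rewrite inE connect0.
  rewrite -(prednK Hpos) ltnS; apply/bigmax_leqP => m Hm.
  by rewrite -ltnS (prednK Hpos); apply/height_edge/(gedgeP Ha Hr Hm).
rewrite /potential (bigD1 a0) //= [X in _ < X](bigD1 a0) //= -addSn.
apply: leq_add; first by rewrite ffunE Ha0; apply: Hlt.
by apply: leq_sum => a _; rewrite ffunE; case: ifP => // Ha; apply/ltnW/Hlt.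
Qed.

End Acyclic.

Section Irreducible.
Hypotheses (det : deterministic N) (acyc : acyclic N) (snd : sound N).
Hypotheses (no_merge : ~ merge_applicable N) (no_shortcut : ~ dshortcut_applicable N).

Lemma enabled_x0 : enabled N (x0 N) (n0 N).
Proof. by move=> a _; rewrite ffunE set11. Qed.

Lemma sound_completion s y : occurs N (x0 N) s y -> exists s', occurs N y s' xF.
Proof.
move=> Hs; case: (proj2 snd _ _ Hs) => [Hl|[s' Hl]].
  by exists [::]; rewrite /= (occurs_functional Hs Hl).
by case/occurs_cat: Hl => y' [Hs' Hy']; exists s'; rewrite (occurs_functional Hs Hs').
Qed.

(* Determinism supplies the last clause of the d-shortcut guard. *)
Lemma shortcut_target_branches n n' r :
  n != n' -> r \in R N n -> uncond_enables N n r n' -> 1 < #|R N n'|.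
Proof.
move=> Hnn' Hr Hun; rewrite ltnNge; apply/negP => Hn'; apply: no_shortcut.
exists n, n', r; split=> // -[m [a [r' [/andP [Ha Hr'] Hm Hn'm]]]].
by exists m, a, r'; split; rewrite ?/inT ?Ha //; apply: X_set1.
Qed.

Lemma final_unbranched : #|R N (nf N)| <= 1.
Proof.
rewrite leqNgt; apply/negP => /card_gt1P [r1 [r2 [Hr1 Hr2 Hne]]].
apply: no_merge; exists (nf N), r1, r2; split=> // a Ha.
by move: (X_empty Ha Hr1) (X_empty Ha Hr2); rewrite eqxx => /eqP -> /eqP ->.
Qed.

(* Minimize the potential: firing any other enabled atom would keep n enabled,
   as each agent holds at most one token. *)
Lemma reachable_only_enabled n : exists s x, [/\ occurs N (x0 N) s x,
  enabled N x n & forall e, enabled N x e -> e = n].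
Proof.
have [x [[[s Hs] Hn] Hmin]] : exists x,
    ((exists s, occurs N (x0 N) s x) /\ enabled N x n) /\
    forall x', (exists s, occurs N (x0 N) s x') /\ enabled N x' n ->
      potential x <= potential x'.
  apply: ex_minimizer; have [s [x [Hs Hn]]] := proj1 snd n.
  by exists x; split; first exists s.
exists s, x; split=> // e He; case: (eqVneq e n) => // Hen; exfalso.
have [r Hr] := exists_outcome e.
have Hn' : enabled N (fire N x e r) n.
  move=> a Ha; rewrite ffunE; case: ifP => [Hae|_]; last exact: Hn.
  have Hx := one_token_reachable det Hs.
  by move: Hen; rewrite (one_token_eq Hx (He a Hae) (Hn a Ha)) eqxx.
have Hreach : exists s', occurs N (x0 N) s' (fire N x e r).
  by exists (rcons s (e, r)); apply: occurs_rcons.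
have := Hmin (fire N x e r) (conj Hreach Hn').
by rewrite leqNgt (potential_fire acyc He Hr).
Qed.

Section LastBranching.
Variable n : Nt.
Hypothesis n_nf : n != nf N.

Definition after m := exists2 u, E n u & connect E u m.

Hypothesis after_unbranched : forall m, after m -> #|R N m| <= 1.
Variables (sx : seq (Nt * Out)) (x : marking A Nt).
Hypotheses (Hx : occurs N (x0 N) sx x) (x_enabled : enabled N x n).
Hypothesis x_only : forall e, enabled N x e -> e = n.

Notation y r := (fire N x n r).

Lemma y_reachable r : r \in R N n -> occurs N (x0 N) (rcons sx (n, r)) (y r).
Proof. exact: occurs_rcons Hx x_enabled. Qed.

Lemma one_token_y r : r \in R N n -> one_token (y r).
Proof. by move/y_reachable/(one_token_reachable det). Qed.

Definition beyond z :=
  forall a, (a \notin P N n /\ z a = x a) \/ {in z a, forall m, after m}.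

Lemma beyond_y r : r \in R N n -> beyond (y r).
Proof.
move=> Hr a; rewrite ffunE; case: ifP => Ha; last by left; split=> //; apply/negbT.
by right=> m Hm; exists m; [apply: gedgeP Ha Hr Hm|].
Qed.

Lemma after_neq m : after m -> m != n.
Proof. by case=> u Hnu Hum; apply: contraTneq (acyc Hnu) => Emn; rewrite -Emn Hum. Qed.

(* An atom fired beyond x but not after n would already be enabled at x. *)
Lemma after_fired z s w m r : beyond z -> occurs N z s w -> (m, r) \in s -> after m.
Proof.
elim: s z => [|[e re] s IH] z //= Hz [He Hre Hs].
have Hae : after e.
  apply: NNPP => Hnae.
  have Hheld a : a \in P N e -> a \notin P N n /\ z a = x a.
    by move=> Ha; case: (Hz a) => // Hafter; case: Hnae; apply/Hafter/He.
  have Hex : enabled N x e by move=> a Ha; case: (Hheld a Ha) => _ <-; apply: He.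
  have [a Ha] := exists_party e.
  by case: (Hheld a Ha); rewrite -(x_only Hex) Ha.
rewrite inE => /orP [/eqP [-> _]|Hin] //; apply: (IH _ _ Hs Hin) => a.
rewrite ffunE; case: ifP => Ha; last exact: Hz.
right=> m' Hm'; case: Hae => u Hnu Hue; exists u => //.
by apply: connect_trans Hue (connect1 (gedgeP Ha Hre Hm')).
Qed.

Definition inevitable m :=
  forall r s, r \in R N n -> occurs N (y r) s xF -> m \in map fst s.

Lemma inevitable_held a m : a \notin P N n -> m \in x a -> inevitable m.
Proof.
move=> Ha Hm r s Hr Hs; have Hm' : m \in y r a by rewrite ffunE (negbTE Ha).
have [r' [Hin _]] := token_consumed det (one_token_y Hr) Hs Hm'.
exact: mem_map_fst Hin.
Qed.

Lemma inevitable_successor f a rf m : inevitable f -> after f ->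
  a \in P N f -> rf \in R N f -> m \in X N f a rf -> inevitable m.
Proof.
move=> Hf Haf Ha Hrf Hm r s Hr Hs.
case/mapP: (Hf r s Hr Hs) => -[f' rf'] Hin /= Ef; subst f'.
have [s1 [s2 [z [-> Hs1 _ Hrf' Hs2]]]] := occurs_split Hs Hin.
have Erf : rf' = rf by apply: (card_le1_eqP (after_unbranched Haf)).
subst rf'.
have Hz := one_token_fire det (one_token_occurs det (one_token_y Hr) Hs1) Hrf.
have Hm' : m \in fire N z f rf a by rewrite ffunE Ha.
have [q [Hq _]] := token_consumed det Hz Hs2 Hm'.
by rewrite map_cat mem_cat /= inE (mem_map_fst Hq) !orbT.
Qed.

(* Induction on the position of the fired atom: every token it consumes
   comes either from (n, r) or from an earlier, hence inevitable, atom. *)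
Lemma fired_inevitable r s : r \in R N n -> occurs N (y r) s xF ->
  {in map fst s, forall m, inevitable m}.
Proof.
move=> Hr Hs; suff IH k s1 g rg s2 : size s1 < k -> s = s1 ++ (g, rg) :: s2 -> inevitable g.
  move=> g /mapP [[g' rg] Hin /= ->].
  by have [s1 [s2 [z [Es _ _ _ _]]]] := occurs_split Hs Hin; apply: IH Es.
elim: k s1 g rg s2 => // k IH s1 g rg s2 Hk Es.
move: (Hs); rewrite Es => /occurs_cat [z [Hs1 /= [Hg _ _]]].
have Hgs : (g, rg) \in s by rewrite Es mem_cat inE eqxx orbT.
have Hag := after_fired (beyond_y Hr) Hs Hgs.
case: (classic (inevitable g)) => // Hng; exfalso.
have Hpar a : a \in P N g -> a \in P N n /\ X N n a r = [set g].
  move=> Ha; case: (occurs_token_source Hs1 (Hg a Ha)) => [|[f [rf [Hf Haf Hrf Hgf]]]].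
    rewrite ffunE; case: ifP => Han Hga; first by split=> //; apply: X_set1.
    by case: Hng; apply: (inevitable_held (negbT Han)) Hga.
  case: Hng; apply: (inevitable_successor _ _ Haf Hrf Hgf); last first.
    by apply: (@after_fired _ _ _ f rf (beyond_y Hr) Hs); rewrite Es mem_cat Hf.
  have [t1 [t2 [w [Es1 _ _ _ _]]]] := occurs_split Hs1 Hf.
  apply: (IH t1 f rf (t2 ++ (g, rg) :: s2)); last by rewrite Es Es1 -catA.
  by move: Hk; rewrite Es1 size_cat /= addnS ltnS; apply: leq_ltn_trans (leq_addr _ _).
have Hun : uncond_enables N n r g.
  by split=> [|a /Hpar []//]; apply/subsetP => a /Hpar [].
have Hng' : n != g by rewrite eq_sym after_neq.
by move: (shortcut_target_branches Hng' Hr Hun); rewrite ltnNge after_unbranched.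
Qed.

Lemma successor_connect b ra rb ta tb :
  b \in P N n -> ra \in R N n -> rb \in R N n ->
  ta \in X N n b ra -> tb \in X N n b rb -> connect E tb ta.
Proof.
move=> Hb Hra Hrb Hta Htb.
have [ca Hca] := sound_completion (y_reachable Hra).
have [cb Hcb] := sound_completion (y_reachable Hrb).
have Hty : ta \in y ra b by rewrite ffunE Hb.
have [q [Hq Hbt]] := token_consumed det (one_token_y Hra) Hca Hty.
have := fired_inevitable Hra Hca (mem_map_fst Hq) Hrb Hcb.
case/mapP => -[t q'] Hin /= Et; subst t.
have [m] := occurs_fired_connect Hcb Hin Hbt.
by rewrite ffunE Hb (X_set1 det Hb Hrb Htb) in_set1 => /eqP ->.
Qed.

Lemma last_branching_unbranched : #|R N n| <= 1.
Proof.
rewrite leqNgt; apply/negP => /card_gt1P [r1 [r2 [Hr1 Hr2 Hne]]].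
apply: no_merge; exists n, r1, r2; split=> // b Hb.
have [t1 Ht1] : exists t, t \in X N n b r1 by apply/set0Pn; rewrite (X_empty Hb Hr1).
have [t2 Ht2] : exists t, t \in X N n b r2 by apply/set0Pn; rewrite (X_empty Hb Hr2).
rewrite (X_set1 det Hb Hr1 Ht1) (X_set1 det Hb Hr2 Ht2).
by rewrite (connect_antisym acyc (successor_connect Hb Hr2 Hr1 Ht2 Ht1)
                                 (successor_connect Hb Hr1 Hr2 Ht1 Ht2)).
Qed.

End LastBranching.

Lemma unbranched m : #|R N m| <= 1.
Proof.
rewrite leqNgt; apply/negP => Hm.
have [n [Hn Hmin]] := @ex_minimizer _ (fun m => 1 < #|R N m|) height (ex_intro _ m Hm).
have Hnf : n != nf N by apply: contraTneq Hn => ->; rewrite -leqNgt final_unbranched.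
have Hafter f : after n f -> #|R N f| <= 1.
  case=> u Hnu Huf; rewrite leqNgt; apply/negP => /Hmin Hnf'.
  by move: (leq_trans Hnf' (height_connect Huf)); rewrite leqNgt (height_edge acyc Hnu).
have [s [x [Hs Hxn Honly]]] := reachable_only_enabled n.
by rewrite ltnNge (last_branching_unbranched Hnf Hafter Hs Hxn Honly) in Hn.
Qed.

Lemma initial_final_eq : n0 N = nf N.
Proof.
apply/eqP; apply: contraT => Hne.
have [r Hr] := exists_outcome (n0 N).
have Hfire := @occurs_rcons _ [::] _ _ _ (erefl _) enabled_x0 Hr.
have [[|[e re] s] /= Hs] := sound_completion Hfire.
  have /card_gt0P [a _] := agents_nonempty N.
  move/(congr1 (fun z : marking A Nt => z a)): Hs; rewrite !ffunE P_n0.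
  by move/esym/eqP; rewrite (X_empty (P_n0 N a) Hr) (negbTE Hne).
case: Hs => He _ _.
have Hpar a : a \in P N e -> X N (n0 N) a r = [set e].
  move=> Ha; have := He a Ha; rewrite ffunE P_n0.
  exact: (X_set1 det (P_n0 N a) Hr).
have Hne' : n0 N != e.
  have [a Ha] := exists_party e.
  by apply/(edge_neq acyc)/(gedgeP (P_n0 N a) Hr); rewrite Hpar // set11.
have Hun : uncond_enables N (n0 N) r e by split=> //; apply/subsetP => a; rewrite P_n0.
by move: (shortcut_target_branches Hne' Hr Hun); rewrite ltnNge unbranched.
Qed.

Lemma atom_eq_initial m : m = n0 N.
Proof.
have [s [x [Hs Hm]]] := proj1 snd m.
case: s Hs => [|[e r] s] /= => [Ex|[He Hr Hs]].
  by have [a Ha] := exists_party m; move: (Hm a Ha); rewrite Ex ffunE in_set1 => /eqP.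
have [a Ha] := exists_party e; move: (He a Ha); rewrite ffunE in_set1 => /eqP Ee.
subst e; have Hfinal : fire N (x0 N) (n0 N) r = xF.
  apply/ffunP => a'; rewrite !ffunE P_n0; apply/eqP.
  by rewrite (X_empty (P_n0 N a') Hr); apply/eqP; exact: initial_final_eq.
by rewrite Hfinal in Hs; case: (occurs_from_final_dead Hs Hm).
Qed.

End Irreducible.
End Negotiation.

Theorem theorem5 (A Nt Out : finType) (Qa : A -> Type)
    (N : @negotiation A Nt Out Qa) :
  SDAN N -> irreducible N -> #|Nt| = 1.
Proof.
case=> snd det acyc [no_merge no_shortcut].
apply: (@eq_card1 _ (n0 N)) => m; rewrite !inE.
by rewrite (atom_eq_initial det acyc snd no_merge no_shortcut m) eqxx.
Qed.
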